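(* Let $T=\bigoplus_p T_p$ be a torsion abelian group with every $T_p$ finite, and let $G$ be a pure subgroup of $\prod_p T_p$ containing $T$ such that $G/T$ is divisible (so $T$ is the torsion subgroup of $G$). Let $\gamma:G\to G$ be any endomorphism and $X=\gamma(G)$, with torsion subgroup $T_X$. Then $T_X=\gamma(T)$ and $X/T_X$ is divisible.
   Context: All groups are abelian; $T_p$ is the $p$-primary component of $T$, and $T=\bigoplus_p T_p$ is identified with its natural image in $\prod_p T_p$. *)

From mathcomp Require Import all_boot all_algebra.
Set Implicit Arguments. Unset Strict Implicit. Unset Printing Implicit Defensive.
Import GRing.Theory.
Local Open Scope ring_scope.

Section ProdGroup.
Variable T : nat -> finZmodType.

Definition prodT := forall p : nat, T p.
Definition padd (x y : prodT) : prodT := fun p => x p + y p.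
Definition popp (x : prodT) : prodT := fun p => - x p.
Definition pzero : prodT := fun p => 0.
Definition pnat (n : nat) (x : prodT) : prodT := fun p => x p *+ n.

Definition primary_family : Prop :=
  forall p : nat,
    (prime p -> forall x : T p, exists k : nat, x *+ (p ^ k) = 0) /\
    (~~ prime p -> forall x : T p, x = 0).

Definition in_dsum (x : prodT) : Prop :=
  exists N : nat, forall p : nat, (N <= p)%N -> x p = 0.

Definition is_subgroup (G : prodT -> Prop) : Prop :=
  G pzero /\ forall x y, G x -> G y -> G (padd x (popp y)).

Definition pure_in_prod (G : prodT -> Prop) : Prop :=
  forall (n : nat) (x : prodT), (0 < n)%N -> G x ->
    (exists y : prodT, x = pnat n y) -> exists z, G z /\ x = pnat n z.

Definition quot_divisible (G H : prodT -> Prop) : Prop :=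
  forall (n : nat) (x : prodT), (0 < n)%N -> G x ->
    exists y, G y /\ H (padd x (popp (pnat n y))).

(* gamma is an endomorphism of G (its values outside G are irrelevant) *)
Definition is_endo (G : prodT -> Prop) (gamma : prodT -> prodT) : Prop :=
  (forall x, G x -> G (gamma x)) /\
  (forall x y, G x -> G y -> gamma (padd x y) = padd (gamma x) (gamma y)).

Definition is_torsion (x : prodT) : Prop :=
  exists n : nat, (0 < n)%N /\ forall p, x p *+ n = 0.

End ProdGroup.

(* The heart of the argument is that gamma acts componentwise: if g is in G
   and g_p = 0, then g is divisible by the exponent p^j of T_p inside
   prod_q T_q (multiplication by p^j is bijective on every T_q with q <> p),
   hence by purity g = p^j z with z in G, and gamma(g)_p = p^j gamma(z)_p = 0.
   So gamma(g)_p depends only on g_p.  A torsion element gamma(g) has finite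
   support, and therefore equals gamma of the finitely supported truncation
   of g; conversely gamma maps T into torsion.  Divisibility of X/T_X is
   inherited from that of G/T through gamma. *)

From Pilot Require Import Defs.
From mathcomp Require Import all_boot all_algebra.
From Stdlib Require Import FunctionalExtensionality.
Set Implicit Arguments. Unset Strict Implicit.
Import GRing.Theory.
Local Open Scope ring_scope.

Lemma mulrn_coprime_eq0 (V : zmodType) (x : V) a b :
  coprime a b -> x *+ a = 0 -> x *+ b = 0 -> x = 0.
Proof.
move=> cab xa0 xb0; have [a0|a_gt0] := posnP a.
  by move: cab xb0; rewrite a0 /coprime gcd0n => /eqP ->; rewrite mulr1n.
have [u v Ebez _] := egcdnP b a_gt0; move: Ebez; rewrite (eqP cab) => Ebez.
have : x *+ (u * a) = x *+ (v * b + 1) by rewrite Ebez.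
by rewrite mulnC mulrnA xa0 mul0rn mulrnDr mulr1n mulnC mulrnA xb0 mul0rn add0r.
Qed.

Section PrimaryFamily.
Variable T : nat -> finZmodType.
Hypothesis hT : primary_family T.

Lemma primary_exponent p : prime p ->
  exists j, forall y : T p, y *+ (p ^ j)%N = 0.
Proof.
move=> p_pr.
suff [j hj] : exists j, forall y, y \in enum (T p) -> y *+ (p ^ j)%N = 0.
  by exists j => y; apply: hj; rewrite mem_enum.
elim: (enum (T p)) => [|a s [j IH]]; first by exists 0%N.
have [k hk] := (hT p).1 p_pr a.
exists (k + j)%N => y; rewrite inE expnD => /predU1P [->|ys].
  by rewrite mulrnA hk mul0rn.
by rewrite mulnC mulrnA IH // mul0rn.
Qed.

Lemma component_exponent p : exists2 k, (0 < k)%N & forall y : T p, y *+ k = 0.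
Proof.
have [p_pr|p_npr] := boolP (prime p).
  have [j hj] := primary_exponent p_pr.
  by exists (p ^ j)%N; rewrite // expn_gt0 prime_gt0.
by exists 1%N => // y; rewrite ((hT p).2 p_npr y) mul0rn.
Qed.

Lemma components_below_exponent N : exists2 n, (0 < n)%N &
  forall p, (p < N)%N -> forall y : T p, y *+ n = 0.
Proof.
elim: N => [|N [n n_gt0 hn]]; first by exists 1%N.
have [k k_gt0 hk] := component_exponent N.
exists (n * k)%N; first by rewrite muln_gt0 n_gt0.
move=> p; rewrite ltnS leq_eqVlt => /predU1P [->|ltpN] y.
  by rewrite mulnC mulrnA hk mul0rn.
by rewrite mulrnA hn // mul0rn.
Qed.

Lemma mulrn_primeX_surj p j q : prime p -> q != p ->
  forall z : T q, exists y, y *+ (p ^ j)%N = z.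
Proof.
move=> p_pr nqp z.
have inj : injective (fun y : T q => y *+ (p ^ j)%N).
  move=> y1 y2 /= e; apply/eqP; rewrite -subr_eq0; apply/eqP.
  have e0 : (y1 - y2) *+ (p ^ j)%N = 0 by rewrite mulrnBl e subrr.
  have [q_pr|q_npr] := boolP (prime q); last exact: (hT q).2.
  have [k hk] := (hT q).1 q_pr (y1 - y2).
  apply: (mulrn_coprime_eq0 _ e0 hk); apply/coprimeXl/coprimeXr.
  by rewrite prime_coprime // dvdn_prime2 // eq_sym.
have [g _ gK] := injF_bij inj.
by exists (g z); rewrite gK.
Qed.

Lemma divisible_off_component p j (s : prodT T) : prime p ->
  (forall y : T p, y *+ (p ^ j)%N = 0) -> s p = 0 ->
  exists y, s = Defs.pnat (p ^ j)%N y.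
Proof.
move=> p_pr hj sp0.
exists (fun q => odflt 0 [pick y : T q | y *+ (p ^ j)%N == s q]).
apply: functional_extensionality_dep => q; rewrite /Defs.pnat.
case: pickP => [y /eqP -> //|none]; exfalso.
have [eqp|nqp] := eqVneq q p.
  by subst q; move: (none 0); rewrite mul0rn sp0 eqxx.
have [y hy] := mulrn_primeX_surj j p_pr nqp (s q).
by move: (none y); rewrite hy eqxx.
Qed.

Lemma torsion_in_dsum (x : prodT T) : is_torsion x -> in_dsum x.
Proof.
move=> [n [n_gt0 hn]]; exists n.+1 => p ltnp.
have [p_pr|p_npr] := boolP (prime p); last exact: (hT p).2.
have [k hk] := (hT p).1 p_pr (x p).
apply: (mulrn_coprime_eq0 _ (hn p) hk); apply: coprimeXr.
rewrite coprime_sym prime_coprime //; apply/negP => /(dvdn_leq n_gt0).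
by rewrite leqNgt ltnp.
Qed.

Lemma dsum_annihilated (x : prodT T) : in_dsum x ->
  exists2 n, (0 < n)%N & Defs.pnat n x = pzero T.
Proof.
move=> [N hN]; have [n n_gt0 hn] := components_below_exponent N.
exists n => //; apply: functional_extensionality_dep => p.
rewrite /Defs.pnat /pzero; have [ltpN|lePp] := ltnP p N; first by rewrite hn.
by rewrite hN // mul0rn.
Qed.

End PrimaryFamily.

Section Endomorphism.
Variable T : nat -> finZmodType.
Variables (G : prodT T -> Prop) (gamma : prodT T -> prodT T).
Hypotheses (hG : is_subgroup G) (hgamma : is_endo G gamma).

Let prodT_ext (x y : prodT T) : (forall p, x p = y p) -> x = y.
Proof. exact: functional_extensionality_dep. Qed.

Lemma subgroup_opp x : G x -> G (popp x).
Proof.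
move=> Gx; have := hG.2 _ _ hG.1 Gx.
by congr G; apply: prodT_ext => p; rewrite /padd /pzero add0r.
Qed.

Lemma subgroup_add x y : G x -> G y -> G (padd x y).
Proof.
move=> Gx Gy; have := hG.2 _ _ Gx (subgroup_opp Gy).
by congr G; apply: prodT_ext => p; rewrite /padd /popp opprK.
Qed.

Lemma subgroup_pnat n x : G x -> G (Defs.pnat n x).
Proof.
move=> Gx; elim: n => [|n IH].
  by have := hG.1; congr G; apply: prodT_ext => p; rewrite /Defs.pnat mulr0n.
have -> : Defs.pnat n.+1 x = padd (Defs.pnat n x) x.
  by apply: prodT_ext => p; rewrite /Defs.pnat /padd mulrSr.
exact: subgroup_add.
Qed.

Lemma endo0 : gamma (pzero T) = pzero T.
Proof.
have := hgamma.2 _ _ hG.1 hG.1.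
have -> : padd (pzero T) (pzero T) = pzero T.
  by apply: prodT_ext => p; rewrite /padd /pzero addr0.
move=> e; apply: prodT_ext => p; move/(congr1 (fun f => f p)): e.
rewrite /padd => e; apply: (addrI (gamma (pzero T) p)).
by rewrite -e /pzero addr0.
Qed.

Lemma endo_pnat n x : G x -> gamma (Defs.pnat n x) = Defs.pnat n (gamma x).
Proof.
move=> Gx; elim: n => [|n IH].
  have -> : Defs.pnat 0 x = pzero T by apply: prodT_ext => p; rewrite /Defs.pnat mulr0n.
  by rewrite endo0; apply: prodT_ext => p; rewrite /Defs.pnat mulr0n.
have -> : Defs.pnat n.+1 x = padd (Defs.pnat n x) x.
  by apply: prodT_ext => p; rewrite /Defs.pnat /padd mulrSr.
rewrite hgamma.2 ?IH //; last exact: subgroup_pnat.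
by apply: prodT_ext => p; rewrite /Defs.pnat /padd mulrSr.
Qed.

Lemma endo_sub_at a b p : G a -> G b ->
  gamma (padd a (popp b)) p = gamma a p - gamma b p.
Proof.
move=> Ga Gb.
have Eab : a = padd (padd a (popp b)) b.
  by apply: prodT_ext => q; rewrite /padd /popp subrK.
have /(congr1 (fun f => f p)) := congr1 gamma Eab.
rewrite hgamma.2 //; last exact: hG.2.
by rewrite /padd => ->; rewrite addrK.
Qed.

Hypothesis hT : primary_family T.
Hypothesis hpure : pure_in_prod G.

Lemma endo_component_eq0 p s : G s -> s p = 0 -> gamma s p = 0.
Proof.
move=> Gs sp0.
have [p_pr|p_npr] := boolP (prime p); last exact: (hT p).2.
have [j hj] := primary_exponent hT p_pr.
have [y ey] := divisible_off_component hT p_pr hj sp0.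
have pj_gt0 : (0 < p ^ j)%N by rewrite expn_gt0 prime_gt0.
have [z [Gz ->]] := hpure pj_gt0 Gs (ex_intro _ y ey).
by rewrite endo_pnat // /Defs.pnat hj.
Qed.

Lemma endo_component_eq p a b : G a -> G b -> a p = b p -> gamma a p = gamma b p.
Proof.
move=> Ga Gb eab; apply/eqP; rewrite -subr_eq0 -endo_sub_at //; apply/eqP.
by apply: endo_component_eq0; [exact: hG.2 | rewrite /padd /popp eab subrr].
Qed.

Hypothesis hTG : forall x, in_dsum x -> G x.

Lemma endo_torsion_image g : G g -> is_torsion (gamma g) ->
  exists t, in_dsum t /\ gamma g = gamma t.
Proof.
move=> Gg /(torsion_in_dsum hT) [N hN].
pose t : prodT T := fun p => if (p < N)%N then g p else 0.
have dsum_t : in_dsum t by exists N => p lePp; rewrite /t ltnNge lePp.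
have Gt := hTG dsum_t.
exists t; split => //; apply: prodT_ext => p.
have [ltpN|lePp] := ltnP p N; first by apply: endo_component_eq; rewrite // /t ltpN.
by rewrite hN // endo_component_eq0 // /t ltnNge lePp.
Qed.

Lemma endo_dsum_torsion t : in_dsum t -> is_torsion (gamma t).
Proof.
move=> dsum_t; have [n n_gt0 hn] := dsum_annihilated hT dsum_t.
exists n; split => // p.
move/(congr1 (fun x => gamma x p)): hn => /=.
by rewrite endo0 endo_pnat //; exact: hTG.
Qed.

End Endomorphism.

Theorem mainTheorem13 (T : nat -> finZmodType) (hT : primary_family T)
  (G : prodT T -> Prop) (hG : is_subgroup G)
  (hTG : forall x, in_dsum x -> G x)
  (hpure : pure_in_prod G)
  (hdiv : quot_divisible G (@in_dsum T))
  (gamma : prodT T -> prodT T) (hgamma : is_endo G gamma) :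
  let X := fun x : prodT T => exists g, G g /\ x = gamma g in
  let TX := fun x : prodT T => X x /\ is_torsion x in
  (forall x, TX x <-> exists t, in_dsum t /\ x = gamma t) /\
  quot_divisible X TX.
Proof.
move=> X TX.
have torsion_image x : TX x <-> exists t, in_dsum t /\ x = gamma t.
  split=> [[[g [Gg ->]] tor]|[t [dsum_t ->]]].
    exact: (endo_torsion_image hG hgamma hT hpure hTG).
  split; first by exists t; split; first exact: hTG.
  exact: (endo_dsum_torsion hG hgamma hT hTG).
split=> // n _ n_gt0 [g [Gg ->]].
have [y [Gy dsum_rem]] := hdiv n g n_gt0 Gg.
exists (gamma y); split; first by exists y.
apply/torsion_image; exists (padd g (popp (Defs.pnat n y))); split => //.
apply: functional_extensionality_dep => p.
rewrite (endo_sub_at hG hgamma) ?(endo_pnat hG hgamma) //; last exact: subgroup_pnat.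
Qed.
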